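(* Let $q$ be a prime power, $M\geq 2$ an integer, and let $f=gg^*\in\mathbb{F}_q[x]$ be a type $2$ polynomial of degree $2n$, where $g$ is monic irreducible of degree $n$ with $g(0)\neq 0$ and $g\neq g^*$. Let $C_f\in\mathrm{Sp}(2n,q)$ be an element with characteristic polynomial $f$. Then the equation $\alpha^M=C_f$ has a solution $\alpha\in\mathrm{Sp}(2n,q)$ if and only if $g$ is an $M$-power polynomial.
   Context: For a monic polynomial $f$ of degree $r$ with $f(0)\neq0$, $f^*(x)=f(0)^{-1}x^rf(x^{-1})$. $\mathrm{Sp}(2n,q)$ is the group of $2n\times 2n$ matrices over $\mathbb{F}_q$ preserving a non-degenerate alternating bilinear form. A monic irreducible polynomial $g\in\mathbb{F}_q[x]$, $g\neq x$, of degree $k\geq1$ is an $M$-power polynomial if $g(x^M)$ has a monic irreducible factor of degree $k$. *)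

From mathcomp Require Import all_boot all_order all_algebra all_field.
Set Implicit Arguments. Unset Strict Implicit. Unset Printing Implicit Defensive.
Import GRing.Theory.
Local Open Scope ring_scope.

(* f^*(x) = f(0)^{-1} x^r f(1/x), r = deg f: coefficients reversed, scaled. *)
Definition poly_star (F : fieldType) (f : {poly F}) : {poly F} :=
  (f`_0)^-1 *: Poly (rev (polyseq f)).

Definition nondeg_alternating (F : fieldType) (m : nat) (B : 'M[F]_m) : Prop :=
  B^T = - B /\ (forall i, B i i = 0) /\ B \in unitmx.

Definition in_Sp (F : fieldType) (m : nat) (B : 'M[F]_m) (A : 'M[F]_m) : Prop :=
  A \in unitmx /\ A^T *m B *m A = B.

Definition M_power_poly (F : fieldType) (M : nat) (g : {poly F}) : Prop :=
  [/\ g \is monic, irreducible_poly g, g != 'X &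
    exists h : {poly F}, [/\ h \is monic, irreducible_poly h,
       h %| g \Po 'X^M & size h = size g]].

(* Write phi p = p(C) and psi p = p(C^-1).  The adjoint X |-> B^-1 X^T B of the
   symplectic form maps phi p to psi p, and psi g is a unit multiple of phi g^*;
   since g and g^* are coprime and g g^* kills C, both g(C) and g^*(C) have rank n.
   If alpha^M = C, pick an irreducible factor h of g(x^M) with h(alpha) singular and
   v <> 0 killed by h(alpha).  The alpha-cyclic space of v has dimension deg h, lies
   in the n-dimensional kernel of g(C), and contains the C-cyclic space of v, whose
   dimension is deg g = n; hence deg h = n.
   Conversely, comparing the same two cyclic spaces for a matrix A with h(A) = 0
   shows that x is an M-th power p^M modulo g.  If r = p mod g and r = 1 mod g^*,
   then phi r commutes with its adjoint psi r, so alpha = phi r (psi r)^-1 is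
   symplectic, and alpha^M = C. *)

From mathcomp Require Import all_boot all_order all_algebra all_field.
From mathcomp Require Import zify ring.
From Stdlib Require Import Classical.
Import GRing.Theory.
Local Open Scope ring_scope.

Set Implicit Arguments. Unset Strict Implicit. Unset Printing Implicit Defensive.

Section Polynomials.
Variable F : fieldType.
Implicit Types p q d : {poly F}.

Lemma irredp_scale (a : F) p : a != 0 -> irreducible_poly p ->
  irreducible_poly (a *: p).
Proof.
move=> a0 [sp irrp]; split=> [|q sq]; first by rewrite size_scale.
by rewrite dvdpZr // => /(irrp q sq) /eqp_trans; apply; rewrite eqp_sym eqp_scale.
Qed.

Lemma irreducible_dvdp_exists p : (1 < size p)%N ->
  exists2 q, irreducible_poly q & q %| p.
Proof.
elim: {p}(size p) {-2}p (leqnn (size p)) => [|s IH] p sp sp1.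
  by move: sp1; rewrite ltnNge (leq_trans sp).
have [irr_p | red_p] := classic (irreducible_poly p); first by exists p.
have [q [sq qp nqp]] : exists q, [/\ size q != 1%N, q %| p & ~~ (q %= p)].
  apply: NNPP => no_q; apply: red_p; split=> // q sq qp.
  by apply: NNPP => nqp; apply: no_q; exists q; split=> //; apply/negP.
have p0 : p != 0 by rewrite -size_poly_gt0 ltnW.
have q0 : q != 0 by apply: contraNneq p0 => q0; move: qp; rewrite q0 dvd0p.
have sqp : (size q < size p)%N.
  by rewrite ltn_neqAle (dvdp_size_eqp qp) nqp dvdp_leq.
have sq1 : (1 < size q)%N by rewrite ltn_neqAle eq_sym sq size_poly_gt0.
have [|r irr_r rq] := IH q _ sq1; first by rewrite -ltnS (leq_trans sqp).
by exists r; rewrite // (dvdp_trans rq).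
Qed.

Lemma coprimep_dvdp_sub d p q : d %| p - q -> coprimep d p = coprimep d q.
Proof.
by move=> /divpK dpq; rewrite -[p](subrK q) -dpq coprimep_addl_mul.
Qed.

Lemma dvdp_subXX d p q k : d %| p - q -> d %| p ^+ k - q ^+ k.
Proof. by move=> dpq; rewrite subrXX dvdp_mulr. Qed.

Lemma chinese_poly d1 d2 p1 p2 : coprimep d1 d2 ->
  exists r, d1 %| r - p1 /\ d2 %| r - p2.
Proof.
case/Bezout_eq1_coprimepP => -[u w] /= uw.
exists (p1 * (w * d2) + p2 * (u * d1)); split.
- rewrite (_ : _ - p1 = (p2 - p1) * u * d1 + p1 * (u * d1 + w * d2 - 1)).
    by rewrite uw subrr mulr0 addr0 dvdp_mull.
  by ring.
- rewrite (_ : _ - p2 = (p1 - p2) * w * d2 + p2 * (u * d1 + w * d2 - 1)).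
    by rewrite uw subrr mulr0 addr0 dvdp_mull.
  by ring.
Qed.

End Polynomials.

Section HornerMx.
Variables (F : fieldType) (m : nat) (A : 'M[F]_m.+1).
Local Notation phi := (horner_mx A).
Implicit Types p q P Q : {poly F}.

Lemma horner_mx_Xn k : phi 'X^k = A ^+ k.
Proof. by rewrite rmorphXn /= horner_mx_X. Qed.

Lemma horner_mx_comp p q : phi (p \Po q) = horner_mx (phi q) p.
Proof.
elim/poly_ind: p => [|p c IH]; first by rewrite comp_poly0 !rmorph0.
rewrite comp_polyD comp_polyM comp_polyX comp_polyC !(rmorphD, rmorphM) /= IH.
by rewrite !horner_mx_C horner_mx_X.
Qed.

Lemma horner_mx_sum p N : (size p <= N)%N -> phi p = \sum_(i < N) p`_i *: A ^+ i.
Proof.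
move=> spN; rewrite {1}(_ : p = \sum_(i < N) p`_i *: 'X^i).
  by rewrite linear_sum; apply: eq_bigr => i _; rewrite linearZ /= horner_mx_Xn.
rewrite -poly_def; apply/polyP => i; rewrite coef_poly.
by case: ltnP => // Ni; rewrite nth_default // (leq_trans spN Ni).
Qed.

Lemma horner_mx_tr p : (phi p)^T = horner_mx A^T p.
Proof.
elim/poly_ind: p => [|p c IH]; first by rewrite !rmorph0 trmx0.
rewrite !(rmorphD, rmorphM) /= !(horner_mx_X, horner_mx_C) linearD /= tr_scalar_mx.
congr (_ + _); rewrite -[_ * _]/(_ *m _) trmx_mul IH.
exact: comm_mx_horner (comm_mx_refl _).
Qed.

Lemma horner_mx_mulmxC p q : phi p *m phi q = phi q *m phi p.
Proof. exact: comm_horner_mx2. Qed.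

Lemma horner_mx_congr_mul k (N : 'M_(m.+1, k)) P p q :
  phi P *m N = 0 -> P %| p - q -> phi p *m N = phi q *m N.
Proof.
move=> PN /divpK pq; apply/eqP; rewrite -subr_eq0 -mulmxBl -rmorphB -pq.
by rewrite rmorphM -mulmxA PN mulmx0.
Qed.

Lemma mulmx_horner_mx_coprime_eq0 k (X : 'M_(k, m.+1)) P Q :
  coprimep P Q -> X *m phi P = 0 -> X *m phi Q = 0 -> X = 0.
Proof.
case/Bezout_eq1_coprimepP => -[u w] /= uw XP XQ.
have uw1 : phi (u * P + w * Q) = 1%:M by rewrite uw rmorph1.
rewrite -[X]mulmx1 -uw1 rmorphD !rmorphM /= mulmxDr.
rewrite -[phi u * _]comm_horner_mx2 -[phi w * _]comm_horner_mx2.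
by rewrite !mulmxA XP XQ !mul0mx addr0.
Qed.

Lemma horner_mx_coprime_unit P p : phi P = 0 -> coprimep p P -> phi p \in unitmx.
Proof.
move=> PA /Bezout_eq1_coprimepP [[u w] /= uw].
have := congr1 phi uw; rewrite rmorphD !rmorphM /= PA mulr0 addr0 rmorph1.
by case/mulmx1_unit.
Qed.

Lemma horner_mx_singular_irreducible_factor P : P != 0 -> phi P \notin unitmx ->
  exists h, [/\ irreducible_poly h, h %| P & phi h \notin unitmx].
Proof.
elim: {P}(size P) {-2}P (leqnn (size P)) => [|s IH] P sP P0 PA.
  by move: P0; rewrite -size_poly_gt0 ltnNge sP.
have sP1 : (1 < size P)%N.
  rewrite ltnNge; apply: contra PA => /size1_polyC PC.
  have P00 : P`_0 != 0 by rewrite -polyC_eq0 -PC.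
  by rewrite PC horner_mx_C unitmxE det_scalar unitfE expf_neq0.
have [q irr_q qP] := irreducible_dvdp_exists sP1.
have [qA | qA] := boolP (phi q \in unitmx); last by exists q.
have q0 := irredp_neq0 irr_q.
have rA : phi (P %/ q) \notin unitmx.
  by apply: contra PA => rA; rewrite -(divpK qP) rmorphM unitmx_mul rA.
have r0 : P %/ q != 0 by apply: contraNneq P0 => r0; rewrite -(divpK qP) r0 mul0r.
have sr : (size (P %/ q)%R <= s)%N.
  have [sq1 _] := irr_q; rewrite size_divp // leq_subLR (leq_trans sP) //.
  by rewrite -add1n leq_add2r -ltnS prednK // ltnW.
have [h [irr_h hr hA]] := IH _ sr r0 rA.
by exists h; split; rewrite // (dvdp_trans hr) ?divp_dvd.
Qed.

Lemma mulmx_horner_mx_congr k (X : 'M_(k, m.+1)) P p q :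
  X *m phi P = 0 -> P %| p - q -> X *m phi p = X *m phi q.
Proof.
move=> XP /divpK pq; apply/eqP; rewrite -subr_eq0 -mulmxBr -rmorphB -pq.
by rewrite rmorphM comm_horner_mx2 -[_ * _]/(_ *m _) mulmxA XP mul0mx.
Qed.

Lemma mulmx_horner_mx_comp k (X : 'M_(k, m.+1)) p q :
  X *m A = X *m phi q -> X *m phi p = X *m phi (p \Po q).
Proof.
move=> XA; elim/poly_ind: p => [|p c IH]; first by rewrite comp_poly0 !rmorph0.
rewrite comp_polyD comp_polyM comp_polyX comp_polyC !rmorphD !rmorphM /= horner_mx_X.
rewrite !horner_mx_C !mulmxDr -[_ * A]/(_ *m _) -[_ * phi q]/(_ *m _); congr (_ + _).
have pA := horner_mx_mulmxC p 'X; rewrite horner_mx_X in pA.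
by rewrite pA mulmxA XA -mulmxA [phi q *m _]horner_mx_mulmxC mulmxA IH mulmxA.
Qed.

Definition krylov_mx (v : 'rV[F]_m.+1) d : 'M_(d, m.+1) :=
  \matrix_(i < d) (v *m A ^+ i).

Lemma mul_krylov_mx v d (c : 'rV_d) : c *m krylov_mx v d = v *m phi (rVpoly c).
Proof.
rewrite horner_rVpoly !(mulmx_sum_row c) !linear_sum; apply: eq_bigr => i _.
by rewrite !rowK !linearZ /= mxvecK.
Qed.

Lemma row_free_krylov_mx v P : irreducible_poly P -> v != 0 -> v *m phi P = 0 ->
  row_free (krylov_mx v (size P).-1).
Proof.
move=> irr_P v0 vP; apply: inj_row_free => c; rewrite mul_krylov_mx => vc.
rewrite -[c]rVpolyK; have [-> | c0] := eqVneq (rVpoly c) 0; first by rewrite linear0.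
have Pc : coprimep P (rVpoly c).
  rewrite irreducible_poly_coprime //; apply: contraTN isT => /(dvdp_leq c0).
  have [sP1 _] := irr_P; rewrite leqNgt (leq_ltn_trans (size_poly _ _)) //.
  by rewrite prednK // ltnW.
by move: v0; rewrite (mulmx_horner_mx_coprime_eq0 Pc vP vc) eqxx.
Qed.

Lemma horner_mx_sub_krylov_mx v P p : P != 0 -> v *m phi P = 0 ->
  (v *m phi p <= krylov_mx v (size P).-1)%MS.
Proof.
move=> P0 vP; rewrite (mulmx_horner_mx_congr (q := p %% P) vP); last first.
  by rewrite {1}(divp_eq p P) addrK dvdp_mull.
rewrite -(@poly_rV_K _ (size P).-1 (p %% P)) -?mul_krylov_mx ?submxMl //.
by rewrite -ltnS prednK ?ltn_modp // size_poly_gt0.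
Qed.

End HornerMx.

Lemma krylov_mx_exp_sub (F : fieldType) m (A : 'M[F]_m.+1) M v h d :
  h != 0 -> v *m horner_mx A h = 0 ->
  (krylov_mx (A ^+ M) v d <= krylov_mx A v (size h).-1)%MS.
Proof.
move=> h0 vh; apply/row_subP => i.
by rewrite rowK -exprM -horner_mx_Xn horner_mx_sub_krylov_mx.
Qed.

Lemma irreducible_factor_of_mx_exp_root (F : fieldType) m (A : 'M[F]_m.+1) M g :
    (0 < M)%N -> irreducible_poly g ->
    \rank (kermx (horner_mx (A ^+ M) g)) = (size g).-1 ->
  exists h, [/\ h \is monic, irreducible_poly h, h %| g \Po 'X^M & size h = size g].
Proof.
move=> M0 irr_g ker_g; have [sg1 _] := irr_g.
set G := g \Po 'X^M.
have GA : horner_mx A G = horner_mx (A ^+ M) g by rewrite horner_mx_comp horner_mx_Xn.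
have G0 : G != 0 by rewrite comp_poly_eq0 ?size_polyXn ?ltnS // irredp_neq0.
have GA_sing : horner_mx A G \notin unitmx.
  by apply/negP => GAu; move: ker_g; rewrite -GA mxrank_ker mxrank_unit // subnn; lia.
have [h [irr_h hG hA]] := horner_mx_singular_irreducible_factor G0 GA_sing.
have [v v0 vh] : exists2 v : 'rV_m.+1, v != 0 & v *m horner_mx A h = 0.
  by apply/det0P; move: hA; rewrite unitmxE unitfE negbK.
have vG : v *m horner_mx A G = 0.
  by rewrite (mulmx_horner_mx_congr (q := 0) vh) ?subr0 // rmorph0 mulmx0.
have vg : v *m horner_mx (A ^+ M) g = 0 by rewrite -GA.
have free_h := row_free_krylov_mx irr_h v0 vh.
have free_g := row_free_krylov_mx irr_g v0 vg.
have sub_ker : (krylov_mx A v (size h).-1 <= kermx (horner_mx (A ^+ M) g))%MS.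
  apply/row_subP => i; rewrite rowK; apply/sub_kermxP.
  by rewrite -GA -horner_mx_Xn -mulmxA horner_mx_mulmxC mulmxA vG mul0mx.
have hg : ((size h).-1 <= (size g).-1)%N.
  by rewrite -ker_g -(eqP free_h) mxrankS.
have gh : ((size g).-1 <= (size h).-1)%N.
  rewrite -(eqP free_g) -(eqP free_h) mxrankS //.
  exact: krylov_mx_exp_sub (irredp_neq0 irr_h) vh.
have lh0 : lead_coef h != 0 by rewrite lead_coef_eq0 irredp_neq0.
exists ((lead_coef h)^-1 *: h); split.
- by apply/monicP; rewrite lead_coefZ mulVf.
- by apply: irredp_scale; rewrite ?invr_eq0.
- by rewrite dvdpZl ?invr_eq0.
- by rewrite size_scale ?invr_eq0 //; have [sh1 _] := irr_h; lia.
Qed.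

Lemma X_power_mod_of_mx_root (F : fieldType) m (A : 'M[F]_m.+1) M g h :
    irreducible_poly g -> irreducible_poly h -> size h = size g ->
    h %| g \Po 'X^M -> horner_mx A h = 0 ->
  exists p, g %| p ^+ M - 'X.
Proof.
move=> irr_g irr_h shg hG hA.
pose v : 'rV[F]_m.+1 := delta_mx 0 0.
have v0 : v != 0.
  by apply/eqP => /matrixP /(_ 0 0) /eqP; rewrite !mxE eqxx oner_eq0.
have vh : v *m horner_mx A h = 0 by rewrite hA mulmx0.
have vg : v *m horner_mx (A ^+ M) g = 0.
  rewrite -horner_mx_Xn -horner_mx_comp.
  by rewrite (mulmx_horner_mx_congr (q := 0) vh) ?subr0 // rmorph0 mulmx0.
have free_g := row_free_krylov_mx irr_g v0 vg.
have free_h := row_free_krylov_mx irr_h v0 vh.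
have sub := krylov_mx_exp_sub M (size g).-1 (irredp_neq0 irr_h) vh.
(* The two cyclic spaces of v have equal dimensions, so v A = v r(A^M) for some r. *)
have sub' : (krylov_mx A v (size h).-1 <= krylov_mx (A ^+ M) v (size g).-1)%MS.
  by rewrite -(mxrank_leqif_sup sub).2 (eqP free_g) (eqP free_h) shg.
have vA_h := horner_mx_sub_krylov_mx 'X (irredp_neq0 irr_h) vh.
have [c vA] := submxP (submx_trans vA_h sub').
rewrite horner_mx_X mul_krylov_mx in vA.
set r := rVpoly c; rewrite -(horner_mx_Xn A M) -horner_mx_comp in vA.
have vPM : v *m horner_mx (A ^+ M) (r ^+ M - 'X) = 0.
  rewrite -(horner_mx_Xn A M) -horner_mx_comp comp_polyB comp_polyX rmorphXn /=.
  rewrite rmorphB mulmxBr -[(r \Po _) ^+ M]comp_Xn_poly.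
  by rewrite -(mulmx_horner_mx_comp _ vA) subrr.
exists r; apply/negPn/negP => ng; move: v0.
have cop : coprimep g (r ^+ M - 'X) by rewrite irreducible_poly_coprime.
by rewrite (mulmx_horner_mx_coprime_eq0 cop vg vPM) eqxx.
Qed.

Lemma mx_root_exists (F : fieldType) (h : {poly F}) : h \is monic -> (1 < size h)%N ->
  exists m (A : 'M[F]_m.+1), horner_mx A h = 0.
Proof.
move=> mon_h; move: (companionmx h) (companionmxK mon_h).
case: (size h) => [|[|k]] // A chA _.
by exists k, A; rewrite -[in RHS](Cayley_Hamilton A) chA.
Qed.

Lemma X_power_mod_of_irreducible_factor (F : fieldType) M (g h : {poly F}) :
    irreducible_poly g -> h \is monic -> irreducible_poly h ->
    h %| g \Po 'X^M -> size h = size g ->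
  exists p, g %| p ^+ M - 'X.
Proof.
move=> irr_g mon_h irr_h hG shg; have [k [A hA]] := mx_root_exists mon_h irr_h.1.
exact: X_power_mod_of_mx_root irr_g irr_h shg hG hA.
Qed.

Definition form_adj (F : fieldType) m (B X : 'M[F]_m) := invmx B *m X^T *m B.

Section FormAdjoint.
Variables (F : fieldType) (m : nat) (B : 'M[F]_m.+1).
Hypotheses (skew_B : B^T = - B) (unit_B : B \in unitmx).
Local Notation adj := (form_adj B).
Implicit Types X Y C : 'M[F]_m.+1.

Lemma form_adjM X Y : adj (X *m Y) = adj Y *m adj X.
Proof. by rewrite /form_adj trmx_mul -!mulmxA mulKVmx. Qed.

Lemma form_adjK X : adj (adj X) = X.
Proof.
have unit_BT : B^T \in unitmx by rewrite unitmx_tr.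
have BBT : invmx B *m B^T = - 1%:M by rewrite skew_B mulmxN mulVmx.
have BTB : invmx B^T *m B = - 1%:M by rewrite -{2}[B]opprK -skew_B mulmxN mulVmx.
rewrite /form_adj !trmx_mul trmxK trmx_inv !mulmxA BBT -!mulmxA BTB.
by rewrite mulNmx mul1mx mulmxN mulmx1 opprK.
Qed.

Lemma form_adj_unit X : (adj X \in unitmx) = (X \in unitmx).
Proof. by rewrite !unitmx_mul unitmx_inv unitmx_tr unit_B andbT. Qed.

Lemma form_adjV X : X \in unitmx -> adj (invmx X) = invmx (adj X).
Proof.
move=> unit_X; rewrite -[LHS]mulmx1 -(mulmxV (_ : adj X \in unitmx)) ?form_adj_unit //.
by rewrite mulmxA -form_adjM mulmxV // /form_adj trmx1 mulmx1 mulVmx // mul1mx.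
Qed.

Lemma in_Sp_form_adj X : X \in unitmx -> adj X *m X = 1%:M -> in_Sp B X.
Proof.
move=> unit_X adjXX; split=> //.
rewrite -[LHS](mulKVmx unit_B) [invmx B *m _]mulmxA [invmx B *m _]mulmxA.
by rewrite adjXX mulmx1.
Qed.

Lemma form_adj_Sp C : in_Sp B C -> adj C = invmx C.
Proof.
case=> unit_C SpC; rewrite -[LHS](mulmxK unit_C) /form_adj -!mulmxA.
by rewrite (mulmxA C^T) (mulmxA (C^T *m B)) SpC mulKmx.
Qed.

Lemma form_adj_horner_mx C p : in_Sp B C -> adj (horner_mx C p) = horner_mx (invmx C) p.
Proof.
by move/form_adj_Sp <-; rewrite /form_adj horner_mx_tr horner_mx_uconjC.
Qed.

Lemma in_Sp_mul_form_adjV X : X \in unitmx -> X *m adj X = adj X *m X ->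
  in_Sp B (X *m invmx (adj X)).
Proof.
move=> unit_X XadjX; have unit_adjX : adj X \in unitmx by rewrite form_adj_unit.
apply: in_Sp_form_adj; first by rewrite unitmx_mul unit_X unitmx_inv.
rewrite form_adjM form_adjV // form_adjK.
rewrite -mulmxA [adj X *m _]mulmxA -XadjX -[X *m _ *m _]mulmxA.
by rewrite mulKmx // mulmxV.
Qed.

Lemma mxrank_form_adj X : \rank (adj X) = \rank X.
Proof.
by rewrite mxrankMfree ?row_free_unit // eqmxMfull ?row_full_unit ?unitmx_inv // mxrank_tr.
Qed.

End FormAdjoint.

Section PolyStar.
Variables (F : fieldType) (m : nat).
Implicit Types (Y : 'M[F]_m.+1) (g : {poly F}).

Lemma horner_mx_poly_star Y g n : Y \in unitmx -> size g = n.+1 ->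
  horner_mx Y (poly_star g) = (g`_0)^-1 *: (Y ^+ n * horner_mx (invmx Y) g).
Proof.
move=> unit_Y sg; rewrite /poly_star linearZ /=; congr (_ *: _).
rewrite (horner_mx_sum Y (p := Poly (rev g)) (N := n.+1)); last first.
  by rewrite -sg -(size_rev g) size_Poly.
rewrite (horner_mx_sum _ (p := g) (N := n.+1)) ?sg // mulr_sumr.
rewrite (reindex_inj rev_ord_inj); apply: eq_bigr => i _ /=.
have le_in : (i <= n)%N by rewrite -ltnS.
rewrite subSS coef_Poly nth_rev ?sg ?ltnS ?leq_subr // subSS subKn // -scalerAr.
congr (_ *: _); rewrite -[in Y ^+ n](subnK le_in) exprD -[invmx Y]/(Y^-1) exprVn.
by rewrite mulrK // unitrX.
Qed.

Lemma Poly_rev g : g`_0 != 0 -> Poly (rev g) = rev g :> seq F.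
Proof.
move=> g0; apply: (@PolyK _ 0); move: g0; rewrite /nth.
by case: (polyseq g) => [|a s] //=; rewrite rev_cons last_rcons.
Qed.

Lemma size_poly_star g : g`_0 != 0 -> size (poly_star g) = size g.
Proof. by move=> g0; rewrite size_scale ?invr_eq0 // Poly_rev // size_rev. Qed.

Lemma poly_star_monic g : g`_0 != 0 -> poly_star g \is monic.
Proof.
move=> g0; have sg : (0 < size g)%N.
  by rewrite lt0n size_poly_eq0; apply: contraNneq g0 => ->; rewrite coef0.
apply/monicP; rewrite lead_coefZ /lead_coef Poly_rev // size_rev.
by rewrite nth_rev ?ltn_predL // prednK // subnn mulVf.
Qed.

Lemma coprimep_poly_star g : irreducible_poly g -> g \is monic -> g`_0 != 0 ->
  g != poly_star g -> coprimep g (poly_star g).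
Proof.
move=> irr_g mon_g g0 g_star; rewrite irreducible_poly_coprime //.
apply: contra g_star => g_gs.
by rewrite -eqp_monic ?poly_star_monic // -(dvdp_size_eqp g_gs) size_poly_star.
Qed.

End PolyStar.

Section TypeTwo.
Variables (F : fieldType) (m n : nat) (g : {poly F}) (B C : 'M[F]_m.+1).
Hypotheses (dim_2n : m.+1 = (n + n)%N) (skew_B : B^T = - B) (unit_B : B \in unitmx)
  (Sp_C : in_Sp B C) (size_g : size g = n.+1) (g0 : g`_0 != 0)
  (monic_g : g \is monic) (irr_g : irreducible_poly g)
  (g_neq_star : g != poly_star g) (char_C : char_poly C = g * poly_star g).

Local Notation gs := (poly_star g).
Local Notation phi := (horner_mx C).
Local Notation psi := (horner_mx (invmx C)).

Let unit_C : C \in unitmx := Sp_C.1.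
Let cop_g : coprimep g gs := coprimep_poly_star irr_g monic_g g0 g_neq_star.

Let phi_g_star : phi (g * gs) = 0.
Proof. by rewrite -char_C Cayley_Hamilton. Qed.

Let phi_psiC p q : phi p *m psi q = psi q *m phi p.
Proof.
by apply: comm_mx_horner; apply: comm_horner_mx; rewrite /comm_mx mulmxV ?mulVmx.
Qed.

Lemma mul_horner_mx_g_star : phi g *m phi gs = 0.
Proof. by rewrite -phi_g_star rmorphM. Qed.

Lemma mul_horner_mx_star_g : phi gs *m phi g = 0.
Proof. by rewrite horner_mx_mulmxC mul_horner_mx_g_star. Qed.

Lemma mul_horner_mx_inv_g : psi g *m phi g = 0.
Proof.
have unit_Cn : C ^+ n \in unitmx by rewrite unitrX.
have Cn_psi : C ^+ n *m psi g = g`_0 *: phi gs.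
  by rewrite (horner_mx_poly_star unit_C size_g) scalerA mulfV // scale1r.
rewrite -[LHS](mulKmx unit_Cn) [C ^+ n *m _]mulmxA Cn_psi -scalemxAl.
by rewrite mul_horner_mx_star_g scaler0 mulmx0.
Qed.

Lemma mul_horner_mx_inv_star : psi gs *m phi gs = 0.
Proof.
rewrite (horner_mx_poly_star (Y := invmx C) _ size_g) ?unitmx_inv // invmxK -scalemxAl.
by rewrite -[_ * _]/(_ *m _) -mulmxA mul_horner_mx_g_star mulmx0 scaler0.
Qed.

Lemma rank_horner_mx_g : \rank (phi g) = n.
Proof.
have rank_star : \rank (phi gs) = \rank (phi g).
  rewrite (horner_mx_poly_star unit_C size_g) mxrank_scale_nz ?invr_eq0 //.
  rewrite -[_ * _]/(_ *m _) eqmxMfull ?row_full_unit ?unitrX //.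
  by rewrite -(form_adj_horner_mx unit_B _ Sp_C) mxrank_form_adj.
have le_2n : (\rank (phi g) + \rank (phi gs) <= n + n)%N.
  have := mxrank_mul_min (phi g) (phi gs).
  rewrite mul_horner_mx_g_star mxrank0 leqn0 subn_eq0 => /leq_trans; apply.
  by rewrite dim_2n.
have ge_2n : (n + n <= \rank (phi g) + \rank (phi gs))%N.
  have [[u w] /= uw] := Bezout_eq1_coprimepP _ _ cop_g.
  have := mxrank_add (phi (u * g)) (phi (w * gs)).
  rewrite -dim_2n -rmorphD uw rmorph1 mxrank1 => /leq_trans; apply.
  by rewrite !rmorphM leq_add ?mxrankM_maxr.
lia.
Qed.

Lemma horner_mx_eq_mul_inv q : g %| q - 'X -> gs %| q - 1 -> phi q = C *m psi q.
Proof.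
move=> gq gsq; apply/eqP; rewrite -subr_eq0; apply/eqP.
(* Right multiplication by g(C), resp. g^*(C), lands in ker g^*(C), resp. ker g(C),
   where q(C) acts as 1, resp. C, and q(C^-1) as C^-1, resp. 1. *)
apply: (mulmx_horner_mx_coprime_eq0 (A := C) cop_g); rewrite mulmxBl -mulmxA.
- rewrite (horner_mx_congr_mul mul_horner_mx_star_g gsq).
  rewrite (horner_mx_congr_mul mul_horner_mx_inv_g gq).
  by rewrite rmorph1 horner_mx_X mulKVmx // mul1mx subrr.
- rewrite (horner_mx_congr_mul mul_horner_mx_g_star gq).
  rewrite (horner_mx_congr_mul mul_horner_mx_inv_star gsq).
  by rewrite rmorph1 horner_mx_X mul1mx subrr.
Qed.

Lemma Sp_root_of_X_power_mod M p : (0 < M)%N -> g %| p ^+ M - 'X ->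
  exists alpha, in_Sp B alpha /\ alpha ^+ M = C.
Proof.
move=> M0 gp; have [r [gr gsr]] := chinese_poly p 1 cop_g.
have gq : g %| r ^+ M - 'X.
  by rewrite -(subrK (p ^+ M) (r ^+ M)) -addrA dvdp_add ?dvdp_subXX.
have gsq : gs %| r ^+ M - 1 by rewrite -(expr1n _ M) dvdp_subXX.
have cop_r : coprimep r (g * gs).
  apply: (coprimep_dvdr (dvdp_exp M0 (dvdpp r))).
  rewrite coprimepMr ![coprimep (r ^+ M) _]coprimep_sym.
  rewrite (coprimep_dvdp_sub gq) (coprimep_dvdp_sub gsq) coprimep1 coprimepX.
  by rewrite rootE horner_coef0 g0.
have unit_r : phi r \in unitmx := horner_mx_coprime_unit phi_g_star cop_r.
have psi_r : form_adj B (phi r) = psi r := form_adj_horner_mx unit_B r Sp_C.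
exists (phi r *m invmx (psi r)); split.
  rewrite -psi_r; apply: (in_Sp_mul_form_adjV skew_B unit_B unit_r).
  by rewrite psi_r phi_psiC.
have unit_psi_r : psi r \in unitmx by rewrite -psi_r form_adj_unit.
rewrite exprMn_comm; last exact/commrV/phi_psiC.
rewrite -[invmx _]/((psi r)^-1) exprVn -!rmorphXn /= horner_mx_eq_mul_inv //.
by rewrite -[C *m _]/(C * _) mulrK // rmorphXn unitrX.
Qed.

Lemma Sp_root_iff_power_poly M : (0 < M)%N ->
  (exists alpha, in_Sp B alpha /\ alpha ^+ M = C) <-> M_power_poly M g.
Proof.
move=> M0; split=> [[alpha [_ alphaM]] | [_ _ _ [h [monic_h irr_h hG shg]]]].
- split=> //; first by apply: contraNneq g0 => ->; rewrite coefX.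
  apply: (irreducible_factor_of_mx_exp_root (A := alpha) M0 irr_g).
  by rewrite alphaM mxrank_ker rank_horner_mx_g dim_2n size_g addnK.
- have [p gp] := X_power_mod_of_irreducible_factor irr_g monic_h irr_h hG shg.
  exact: Sp_root_of_X_power_mod M0 gp.
Qed.

End TypeTwo.

Theorem corollary4p19 (F : finFieldType) (M n : nat) (g : {poly F})
    (B : 'M[F]_(n + n)) (Cf : 'M[F]_(n + n)) :
  (2 <= M)%N ->
  g \is monic -> irreducible_poly g -> size g = n.+1 ->
  g.[0] != 0 -> g != poly_star g ->
  nondeg_alternating B ->
  in_Sp B Cf -> char_poly Cf = g * poly_star g ->
  (exists alpha : 'M[F]_(n + n), in_Sp B alpha /\ alpha ^+ M = Cf)
  <-> M_power_poly M g.
Proof.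
move=> M2 monic_g irr_g size_g g0 g_star [skew_B [_ unit_B]] Sp_C char_C.
move: B Cf size_g skew_B unit_B Sp_C char_C.
case: n => [|k] B C size_g skew_B unit_B Sp_C char_C; first by case: irr_g; rewrite size_g.
apply: (@Sp_root_iff_power_poly _ (k + k.+1) k.+1) => //; last exact: ltnW.
by rewrite -horner_coef0.
Qed.
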